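(* Let $p>0$ and $m,n>\max(p+1,2)$ be integers. Then \begin{align*} \zeta_{G_{m,n,p}}(u)^{-1}=&-4u^{2m+2n-2p}+u^{2m+2n-4p}+2u^{m+2n-2p}+2u^{2m+n-2p}\\ &+u^{2n}+u^{2m}+2u^{m+n}-2u^{m+n-2p}-2u^{n}-2u^{m}+1. \end{align*}
   Context: For integers $p>0$ and $m,n>\max(p+1,2)$, $G_{m,n,p}$ is the graph obtained from a cycle $C_m$ and a cycle $C_n$ by identifying a path of $p$ consecutive edges of $C_m$ with a path of $p$ consecutive edges of $C_n$; equivalently, it consists of two distinct vertices joined by three internally disjoint paths of lengths $p$, $m-p$ and $n-p$. It has $m+n-p-1$ vertices and $m+n-p$ edges. For a finite connected graph $G$ with vertex set $V$, edge set $E$ and no vertex of degree $1$, let $r=|E|-|V|+1$, $\mathcal{A}$ the adjacency matrix, $\mathcal{Q}=D-I$ with $D$ the diagonal degree matrix; the reciprocal Ihara zeta function is $\zeta_G(u)^{-1}=(1-u^2)^{r-1}\det(I-\mathcal{A}u+\mathcal{Q}u^2)$. *)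

From HB Require Import structures.
From mathcomp Require Import all_boot all_order all_algebra.
Set Implicit Arguments. Unset Strict Implicit. Unset Printing Implicit Defensive.
Import Order.TTheory GRing.Theory Num.Theory.
Local Open Scope ring_scope.

(* A finite simple graph on 'I_N given by a (symmetric, irreflexive) relation. *)
Section Ihara.
Variables (N : nat) (e : rel 'I_N).

Definition edge_set : {set {set 'I_N}} :=
  [set [set x.1; x.2] | x in [set x : 'I_N * 'I_N | e x.1 x.2]].

Definition deg (i : 'I_N) : nat := #|[set j | e i j]|.

(* cyclomatic number r = |E| - |V| + 1 (as a nat; >= 1 for the graphs of interest) *)
Definition cyclo_rank : nat := (#|edge_set| + 1 - N)%N.

Definition adj_mx : 'M[{poly int}]_N := \matrix_(i, j) (e i j)%:R.
Definition Q_mx : 'M[{poly int}]_N := \matrix_(i, j) ((i == j)%:R * ((deg i)%:R - 1)).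

Definition ihara_recip : {poly int} :=
  (1 - 'X ^+ 2) ^+ (cyclo_rank.-1) *
  \det (1%:M - 'X *: adj_mx + 'X ^+ 2 *: Q_mx).
End Ihara.

(* G_{m,n,p}: vertices 0..m+n-p-2.  The cycle C_m is 0-1-...-(m-1)-0;
   the shared path of length p is 0-1-...-p; the remaining part of C_n is
   the path 0 - m - (m+1) - ... - (m+n-p-2) - p (n-p edges). *)
Definition Gmnp_e0 (m n p : nat) (i j : nat) : bool :=
  [|| ((i.+1 == j) && (j < m))%N,
      ((i == m.-1) && (j == 0))%N,
      ((i == 0) && (j == m))%N,
      ((m <= i) && (i.+1 == j) && (j <= m + n - p - 2))%N
    | ((i == m + n - p - 2) && (j == p))%N].

Definition Gmnp (m n p : nat) : rel 'I_(m + n - p - 1) :=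
  fun i j => Gmnp_e0 m n p i j || Gmnp_e0 m n p j i.
Arguments Gmnp m n p : clear implicits.
Arguments ihara_recip [N] e.

From HB Require Import structures.
From mathcomp Require Import all_boot all_order all_algebra zify ring lra.

(* G_{m,n,p} is a theta graph: the branch vertices 0 and p are joined by three
   paths, every other vertex has degree 2, and r = 2 by the handshake lemma.
   We evaluate the polynomial identity at rationals 0 < u < 1, where all the
   pivots are >= 1, and eliminate the internal vertices of the paths one by one
   with Schur complements.  Along a path the pivots multiply to a continuant
   with the closed form [cont] below, and eliminating a whole path only leaves
   a rank-2 correction on its two ends.  Removing the paths with m - p and
   n - p edges, and then the path 0 - 1 - ... - p, leaves a 1 x 1 matrix; the
   product of the pivots is a rational function of u, u^p, u^(m-p), u^(n-p)
   that simplifies to the stated polynomial. *)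

Set Implicit Arguments. Unset Strict Implicit. Unset Printing Implicit Defensive.
Import Order.TTheory GRing.Theory Num.Theory.
Local Open Scope ring_scope.

(* Square matrices given by their entries as functions on nat, so that all the
   index bookkeeping of the eliminations below is arithmetic on nat. *)
Definition natmx (R : Type) k (f : nat -> nat -> R) : 'M[R]_k := \matrix_(i, j) f i j.

Lemma eq_natmx (R : Type) k (f g : nat -> nat -> R) :
  (forall i j, (i < k)%N -> (j < k)%N -> f i j = g i j) -> natmx k f = natmx k g.
Proof. by move=> fg; apply/matrixP => i j; rewrite !mxE fg. Qed.

Lemma det_castmx (R : comNzRingType) n n' (e : n = n') (A : 'M[R]_n) :
  \det (castmx (e, e) A) = \det A.
Proof. by case: n' / e; rewrite castmx_id. Qed.

Lemma det_block_schur (F : fieldType) k (B : 'M[F]_k) (c : 'cV_k) (r : 'rV_k) (a : F) :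
  a != 0 -> \det (block_mx B c r (a%:M : 'M_1)) = a * \det (B - a^-1 *: (c *m r)).
Proof.
move=> a0.
have -> : block_mx B c r (a%:M : 'M_1) =
    block_mx 1 (a^-1 *: c) 0 1 *m block_mx (B - a^-1 *: (c *m r)) 0 r (a%:M : 'M_1).
  rewrite mulmx_block !mul1mx !mul0mx !add0r -scalemxAl subrK.
  by rewrite mul_mx_scalar scalerA divff // scale1r.
by rewrite (det_mulmx (block_mx _ _ _ _)) det_ublock det_lblock !det1 det_scalar1 !mul1r mulrC.
Qed.

Lemma natmx_block (R : pzRingType) k (f : nat -> nat -> R) :
  natmx k.+1 f = castmx (addn1 k, addn1 k)
    (block_mx (natmx k f) (\col_i f i k) (\row_j f k j) (f k k)%:M).
Proof.
apply/matrixP => i j; rewrite castmxE !mxE.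
by case: splitP => i' /= ->; rewrite !mxE; case: splitP => j' /= ->;
  rewrite !mxE ?ord1 ?addn0 ?mulr1n.
Qed.

Lemma det_natmx_schur (F : fieldType) k (f : nat -> nat -> F) : f k k != 0 ->
  \det (natmx k.+1 f) = f k k * \det (natmx k (fun i j => f i j - f i k * f k j / f k k)).
Proof.
move=> fkk0; rewrite natmx_block det_castmx.
rewrite det_block_schur //; congr (_ * \det _); apply/matrixP => i j.
by rewrite !mxE big_ord1 !mxE mulrC.
Qed.

Section Handshake.
Variables (N : nat) (e : rel 'I_N).
Hypotheses (e_sym : symmetric e) (e_irr : irreflexive e).

Let darts := [set x : 'I_N * 'I_N | e x.1 x.2].

Lemma sum_deg : (\sum_i deg e i = #|darts|)%N.
Proof.
rewrite -sum1dep_card [RHS]big_mkcond -(pair_bigA _ (fun i j => if e i j then 1 else 0)%N).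
apply: eq_bigr => i _; rewrite /deg -sum1dep_card big_mkcond /=.
by apply: eq_bigr => j _; case: (e i j).
Qed.

Lemma darts_with_ends x : e x.1 x.2 ->
  [set y in darts | [set y.1; y.2] == [set x.1; x.2]] = [set x; (x.2, x.1)].
Proof.
case: x => x1 x2 /= ex; apply/setP => -[y1 y2]; rewrite !inE /=.
apply/idP/idP => [/andP[ey /eqP E] | /orP[/eqP[-> ->] | /eqP[-> ->]]]; last first.
- by rewrite e_sym ex setUC eqxx.
- by rewrite ex eqxx.
have y1x : y1 \in [set x1; x2] by rewrite -E set21.
have y2x : y2 \in [set x1; x2] by rewrite -E set22.
move: y1x y2x ey; rewrite !in_set2 !xpair_eqE.
by case/orP=> /eqP-> /orP[] /eqP->; rewrite ?e_irr ?eqxx ?orbT.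
Qed.

Lemma handshake : (#|edge_set e| * 2 = \sum_i deg e i)%N.
Proof.
rewrite sum_deg -[#|darts|]sum1_card (partition_big_imset (fun x => [set x.1; x.2])) /=.
rewrite -sum_nat_const; apply: eq_bigr => _ /imsetP[[x1 x2] + ->]; rewrite inE /= => ex.
rewrite sum1dep_card (@darts_with_ends (x1, x2) ex) cards2 xpair_eqE.
by case: eqP ex => // ->; rewrite e_irr.
Qed.
End Handshake.

Lemma card_ord_in_seq N (s : seq nat) : uniq s -> all (fun x => x < N)%N s ->
  #|[set i : 'I_N | val i \in s]| = size s.
Proof.
move=> us sN.
have -> : [set i : 'I_N | val i \in s] = [set i in pmap insub s].
  by apply/setP => i; rewrite !inE mem_pmap_sub.
rewrite cardsE (card_uniqP _) ?pmap_sub_uniq // size_pmap_sub.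
by apply/eqP; rewrite -all_count.
Qed.

Lemma poly_eq_on_unit_interval (R : numFieldType) (P Q : {poly R}) :
  (forall x, 0 < x -> x < 1 -> P.[x] = Q.[x]) -> P = Q.
Proof.
move=> PQ; apply/eqP; rewrite -subr_eq0; apply/negPn/negP => nz.
pose rs := [seq (k.+2%:R : R)^-1 | k <- iota 0 (size (P - Q))].
suff : (size rs < size (P - Q)%R)%N by rewrite size_map size_iota ltnn.
apply: max_poly_roots nz _ _.
- apply/allP => _ /mapP[k _ ->]; rewrite /root hornerD hornerN subr_eq0 PQ //.
    by rewrite invr_gt0 ltr0n.
  by rewrite invf_lt1 ?ltr0n // ltr1n.
- by rewrite map_inj_uniq ?iota_uniq // => a b /invr_inj /eqP; rewrite eqr_nat => /eqP [].
Qed.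

Section Continuant.
Variables (R : realFieldType) (u : R).
Hypothesis u2_lt1 : u ^+ 2 < 1.

(* [geo j] is 1 + u^2 + ... + u^(2(j-1)), and [cont d j] is the determinant of
   the j x j tridiagonal matrix with off-diagonal entries -u and diagonal
   1 + u^2, ..., 1 + u^2, d; [contS] is the Schur step on its last vertex. *)
Definition diag2 : R := 1 + u ^+ 2.
Definition geo j : R := (1 - (u ^+ j) ^+ 2) / (1 - u ^+ 2).
Definition cont d j : R := (d - u ^+ 2 - (d - 1) * (u ^+ j) ^+ 2) / (1 - u ^+ 2).

Lemma u2_neq1 : 1 - u ^+ 2 != 0.
Proof. by rewrite subr_eq0 eq_sym lt_eqF. Qed.

Lemma cont0 d : cont d 0 = 1.
Proof. by rewrite /cont; field; exact: u2_neq1. Qed.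

Lemma cont1 d : cont d 1 = d.
Proof. by rewrite /cont; field; exact: u2_neq1. Qed.

Lemma geoS j : geo j.+1 = geo j + (u ^+ j) ^+ 2.
Proof. by rewrite /geo (exprS u j); field; exact: u2_neq1. Qed.

Lemma cont_diag2 j : cont diag2 j = geo j.+1.
Proof. by rewrite /cont /geo /diag2 (exprS u j); field; exact: u2_neq1. Qed.

Lemma contS d j : d != 0 -> cont d j.+1 = d * cont (diag2 - u ^+ 2 / d) j.
Proof.
by move=> d0; rewrite /cont /diag2 (exprS u j); field; rewrite d0 u2_neq1.
Qed.

Lemma cont_geo d j : cont d j.+1 = d * geo j.+1 - u ^+ 2 * geo j.
Proof. by rewrite /cont /geo (exprS u j); field; exact: u2_neq1. Qed.

Lemma geo_le_geoS j : geo j <= geo j.+1.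
Proof. by rewrite geoS lerDl sqr_ge0. Qed.

Lemma geo_ge1 j : 1 <= geo j.+1.
Proof.
elim: j => [|j IH]; first by rewrite /geo expr1 divff ?u2_neq1.
exact: le_trans IH (geo_le_geoS _).
Qed.

Lemma diag2_ge1 : 1 <= diag2.
Proof. by rewrite lerDl sqr_ge0. Qed.

Lemma pivot_ge1 d : 1 <= d -> 1 <= diag2 - u ^+ 2 / d.
Proof.
move=> d1; rewrite /diag2 -addrA lerDl subr_ge0 ler_pdivrMr ?(lt_le_trans ltr01 d1) //.
by rewrite ler_peMr ?sqr_ge0.
Qed.

Lemma cont_gt0 d j : 1 <= d -> 0 < cont d j.
Proof.
elim: j d => [|j IH] d d1; first by rewrite cont0.
have d0 : 0 < d := lt_le_trans ltr01 d1.
by rewrite contS ?gt_eqF // mulr_gt0 // IH // pivot_ge1.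
Qed.

(* [attach_path core k d w] extends the matrix [core] on the vertices 0..a by a
   path a+1, ..., k: vertex a+1 is joined to the core vertex b (entry -u), k to
   the core vertex t (entry w), and the diagonal is 1 + u^2 except d at k.
   Eliminating the path leaves [core + path_corr d w (k - a)]. *)
Section AttachPath.
Variables (a b t : nat).

Definition path_link (k : nat) (w : R) (x y : nat) : R :=
  (x == a.+1)%:R * (y == b)%:R * - u + (x == k)%:R * (y == t)%:R * w.

Definition attach_path (core : nat -> nat -> R) (k : nat) d w (i j : nat) : R :=
  if (i <= a)%N && (j <= a)%N then core i j
  else if (a < i)%N && (a < j)%N then
    if i == j then (if i == k then d else diag2)
    else if (i == j.+1) || (j == i.+1) then - u else 0
  else if (a < i)%N then path_link k w i j else path_link k w j i.

Definition path_corr (d w : R) (L i j : nat) : R :=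
  (i == b)%:R * (j == b)%:R * (- u ^+ 2 * cont d L.-1 / cont d L)
  + (i == t)%:R * (j == t)%:R * (- w ^+ 2 * geo L / cont d L)
  + ((i == b)%:R * (j == t)%:R + (i == t)%:R * (j == b)%:R) * (u ^+ L * w / cont d L).

Lemma attach_path_last core k d w : (a < k)%N -> attach_path core k d w k k = d.
Proof. by move=> ak; rewrite /attach_path leqNgt ak /= eqxx. Qed.

Lemma attach_path_last_col core k d w i : (a.+1 < k)%N -> (i < k)%N ->
  attach_path core k d w i k = if (i <= a)%N then (i == t)%:R * w else (i == k.-1)%:R * - u.
Proof.
move=> ak ik; rewrite /attach_path /path_link.
have -> : (k <= a)%N = false by lia.
have -> : (a < k)%N by lia.
have -> : (k == a.+1) = false by lia.
case: (leqP i a) => ia /=; first by rewrite eqxx !mul0r mul1r add0r.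
have -> : (i == k) = false by lia.
have -> : (i == k.+1) = false by lia.
have [->|ik1] := eqVneq i k.-1; first by rewrite prednK ?eqxx ?mul1r ?orbT //; lia.
by rewrite mul0r (_ : (k == i.+1) = false) //; lia.
Qed.

Lemma attach_path_last_row core k d w j : (a < k)%N ->
  attach_path core k d w k j = attach_path core k d w j k.
Proof.
move=> ak; rewrite /attach_path leqNgt ak /= andbF.
case: (leqP j a) => ja //=.
by rewrite [k == j]eq_sym orbC; case: eqP => // <-; rewrite eqxx.
Qed.

Lemma attach_path_schur_step core k (d w : R) i j :
  (a.+1 < k)%N -> (i < k)%N -> (j < k)%N -> d != 0 ->
  attach_path core k d w i j - attach_path core k d w i k * attach_path core k d w k j / d =
  attach_path (fun i j => core i j + (i == t)%:R * (j == t)%:R * (- w ^+ 2 / d))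
    k.-1 (diag2 - u ^+ 2 / d) (u * w / d) i j.
Proof.
move=> ak ik jk d0.
rewrite attach_path_last_row ?attach_path_last_col; try lia.
rewrite /attach_path /path_link.
case: (leqP i a) => ia; case: (leqP j a) => ja /=.
- ring.
- rewrite (ltn_eqF jk) /=; ring.
- rewrite (ltn_eqF ik) /=; ring.
rewrite (ltn_eqF ik).
have [<-|ij] := eqVneq i j; first by case: eqVneq => _ /=; ring.
have [ik1|_] := eqVneq i k.-1; have [jk1|_] := eqVneq j k.-1;
  rewrite /= ?(mul0r, mulr0, subr0) //.
by rewrite ik1 jk1 eqxx in ij.
Qed.

Lemma attach_path_schur_base core (d w : R) i j : (i <= a)%N -> (j <= a)%N -> d != 0 ->
  attach_path core a.+1 d w i j
    - attach_path core a.+1 d w i a.+1 * attach_path core a.+1 d w a.+1 j / d =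
  core i j + path_corr d w 1 i j.
Proof.
move=> ia ja d0; rewrite attach_path_last_row // /attach_path /path_corr /path_link.
rewrite ia ja ltnn !ltnNge ia ja /= !eqxx /= cont0 cont1 /geo divff ?u2_neq1 //.
by field.
Qed.

Lemma path_corr_step (d w : R) L i j : 1 <= d ->
  (i == t)%:R * (j == t)%:R * (- w ^+ 2 / d)
    + path_corr (diag2 - u ^+ 2 / d) (u * w / d) L.+1 i j = path_corr d w L.+2 i j.
Proof.
move=> d1; have d0 : d != 0 by rewrite gt_eqF // (lt_le_trans ltr01 d1).
have c0 : cont (diag2 - u ^+ 2 / d) L.+1 != 0 by rewrite gt_eqF // cont_gt0 // pivot_ge1.
have geoSS : geo L.+2 = (cont d L.+2 + u ^+ 2 * geo L.+1) / d.
  by rewrite cont_geo; field.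
rewrite /path_corr /= geoSS !(contS _ d0) (exprS u L.+1).
move: (cont _ L.+1) (cont _ L) (geo L.+1) (u ^+ L.+1) c0 => C C' g x c0.
by field; rewrite d0 c0.
Qed.

Lemma det_attach_path L core (d w : R) : 1 <= d ->
  \det (natmx (a + L).+2 (attach_path core (a + L).+1 d w)) =
  cont d L.+1 * \det (natmx a.+1 (fun i j => core i j + path_corr d w L.+1 i j)).
Proof.
elim: L core d w => [|L IH] core d w d1; have d0 : d != 0 by rewrite gt_eqF // (lt_le_trans ltr01 d1).
  rewrite addn0 cont1 det_natmx_schur attach_path_last //; congr (_ * \det _).
  by apply: eq_natmx => i j ia ja; rewrite attach_path_schur_base.
have aL : (a < (a + L).+2)%N by lia.
rewrite addnS det_natmx_schur attach_path_last // contS // -mulrA; congr (_ * _).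
set core' := fun i j => core i j + (i == t)%:R * (j == t)%:R * (- w ^+ 2 / d).
rewrite (@eq_natmx _ _ _ (attach_path core' (a + L).+1 (diag2 - u ^+ 2 / d) (u * w / d))).
  by rewrite IH ?pivot_ge1 //; congr (_ * \det _); apply: eq_natmx => i j _ _;
    rewrite -addrA path_corr_step.
by move=> i j ia ja; rewrite attach_path_schur_step //; lia.
Qed.
End AttachPath.

End Continuant.

Definition theta_poly (R : pzRingType) (x : R) (m n p : nat) : R :=
    - 4%:R * x ^+ (2 * m + 2 * n - 2 * p) + x ^+ (2 * m + 2 * n - 4 * p)
    + 2%:R * x ^+ (m + 2 * n - 2 * p) + 2%:R * x ^+ (2 * m + n - 2 * p)
    + x ^+ (2 * n) + x ^+ (2 * m) + 2%:R * x ^+ (m + n)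
    - 2%:R * x ^+ (m + n - 2 * p) - 2%:R * x ^+ n - 2%:R * x ^+ m + 1.

Lemma rmorph_theta_poly (R S : pzRingType) (f : {rmorphism R -> S}) x m n p :
  f (theta_poly x m n p) = theta_poly (f x) m n p.
Proof. by rewrite /theta_poly !(rmorphB, rmorphD, rmorphM, rmorphN, rmorphXn, rmorph1, rmorph_nat). Qed.

Lemma horner_theta_poly (R : comNzRingType) (x : R) m n p :
  (map_poly intr (theta_poly 'X m n p : {poly int})).[x] = theta_poly x m n p.
Proof.
rewrite rmorph_theta_poly [in theta_poly _]/= map_polyX -[LHS]/(horner_eval x _) rmorph_theta_poly.
by rewrite [in theta_poly _]/= horner_evalE hornerX.
Qed.

Section ThetaIdentity.
Variables (R : realFieldType) (u : R).
Hypothesis u2_lt1 : u ^+ 2 < 1.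

(* The entry at either branch vertex, and the entry between them, once two of
   the three paths, with a and b edges, have been eliminated. *)
Definition theta_pivot (a b : nat) : R :=
  1 + 2%:R * u ^+ 2 - u ^+ 2 * geo u a.-1 / geo u a - u ^+ 2 * geo u b.-1 / geo u b.

Definition theta_link (a b : nat) : R := - (u ^+ a / geo u a + u ^+ b / geo u b).

Lemma theta_pivot_ge1 a b : (0 < a)%N -> (0 < b)%N -> 1 <= theta_pivot a b.
Proof.
have ratio_le j : (0 < j)%N -> u ^+ 2 * geo u j.-1 / geo u j <= u ^+ 2.
  move=> j0; have g0 : 0 < geo u j by rewrite -(prednK j0) (lt_le_trans ltr01) ?geo_ge1.
  rewrite -mulrA ler_piMr ?sqr_ge0 // ler_pdivrMr // mul1r.
  by rewrite -{2}(prednK j0) geo_le_geoS.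
move=> a0 b0; have := ratio_le _ a0; have := ratio_le _ b0; rewrite /theta_pivot; lra.
Qed.

Lemma theta_identity p a b : (0 < p)%N -> (0 < a)%N -> (0 < b)%N ->
  (1 - u ^+ 2) * (geo u b * (geo u a * (cont u (theta_pivot a b) p *
    (theta_pivot a b + path_corr u 0 0 (theta_pivot a b) (theta_link a b) p 0 0))))
  = theta_poly u (p + a) (p + b) p.
Proof.
case: p => // P; case: a => // A; case: b => // B _ _ _.
set d := theta_pivot A.+1 B.+1.
set w := theta_link A.+1 B.+1.
have c0 : cont u d P.+1 != 0 by rewrite gt_eqF // cont_gt0 // theta_pivot_ge1.
have -> : cont u d P.+1 * (d + path_corr u 0 0 d w P.+1 0 0) =
    d * cont u d P.+1 - u ^+ 2 * cont u d P - w ^+ 2 * geo u P.+1 + 2%:R * u ^+ P.+1 * w.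
  by rewrite /path_corr /=; field.
(* [field] must only see the atoms u, u^P, u^A and u^B. *)
rewrite /theta_poly.
have -> : (2 * (P.+1 + A.+1) + 2 * (P.+1 + B.+1) - 2 * P.+1 = P + P + A + A + B + B + 6)%N by lia.
have -> : (2 * (P.+1 + A.+1) + 2 * (P.+1 + B.+1) - 4 * P.+1 = A + A + B + B + 4)%N by lia.
have -> : ((P.+1 + A.+1) + 2 * (P.+1 + B.+1) - 2 * P.+1 = P + A + B + B + 4)%N by lia.
have -> : (2 * (P.+1 + A.+1) + (P.+1 + B.+1) - 2 * P.+1 = P + A + A + B + 4)%N by lia.
have -> : (2 * (P.+1 + B.+1) = P + P + B + B + 4)%N by lia.
have -> : (2 * (P.+1 + A.+1) = P + P + A + A + 4)%N by lia.
have -> : ((P.+1 + A.+1) + (P.+1 + B.+1) - 2 * P.+1 = A + B + 2)%N by lia.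
have -> : ((P.+1 + A.+1) + (P.+1 + B.+1) = P + P + A + B + 4)%N by lia.
rewrite /d /w /theta_pivot /theta_link /=.
have gA := geo_ge1 u2_lt1 A; have gB := geo_ge1 u2_lt1 B.
have u2_0 := u2_neq1 u2_lt1.
rewrite /cont /geo in gA gB *.
rewrite !exprD !exprS !expr0 !mulr1 in gA gB u2_0 *.
move: gA gB => /(lt_le_trans ltr01)/lt0r_neq0 + /(lt_le_trans ltr01)/lt0r_neq0.
rewrite !mulf_eq0 !negb_or => /andP[nA _] /andP[nB _].
move: (u ^+ P) (u ^+ A) (u ^+ B) nA nB => x y z nA nB.
by field; rewrite nA nB u2_0.
Qed.

End ThetaIdentity.

Ltac decide_nat_atoms := repeat match goal with
  | |- context [(?x <= ?y)%N] =>
      first [have -> : (x <= y)%N = true by lia | have -> : (x <= y)%N = false by lia]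
  | |- context [(?x == ?y :> nat)] =>
      first [have -> : (x == y) = true by lia | have -> : (x == y) = false by lia]
  end.

Ltac nat_case_bash := rewrite /=; decide_nat_atoms; rewrite /=;
  repeat (first [case: ifP => ? | case: eqP => ? | case: leqP => ?];
          rewrite /=; decide_nat_atoms; rewrite /=);
  try done; try ring; try (exfalso; lia).

Section ThetaGraph.
Variables (m n p : nat).
Hypotheses (p_gt0 : (0 < p)%N) (pm : (p.+2 <= m)%N) (pn : (p.+2 <= n)%N).

Local Notation N := (m + n - p - 1)%N.

Definition gadj (i j : nat) : bool := Gmnp_e0 m n p i j || Gmnp_e0 m n p j i.

Definition nbrs (i : nat) : seq nat :=
  if i == 0 then [:: 1; m.-1; m]
  else if i == p then [:: p.-1; p.+1; N.-1]
  else if (i < m)%N then [:: i.-1; if i == m.-1 then 0 else i.+1]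
  else [:: if i == m then 0 else i.-1; if i == N.-1 then p else i.+1].

Lemma gadj_nbrs i j : (i < N)%N -> (j < N)%N -> gadj i j = (j \in nbrs i).
Proof. by move=> iN jN; rewrite /gadj /Gmnp_e0 /nbrs; nat_case_bash; rewrite !inE; nat_case_bash. Qed.

Lemma nbrs_uniq_bounded i : (i < N)%N -> uniq (nbrs i) && all (fun j => j < N)%N (nbrs i).
Proof. by move=> iN; rewrite /nbrs; nat_case_bash; rewrite !inE; nat_case_bash. Qed.

Lemma size_nbrs i : size (nbrs i) = (2 + (i \in [:: 0; p]))%N.
Proof. by rewrite /nbrs !inE; nat_case_bash. Qed.

Lemma deg_Gmnp (i : 'I_N) : deg (Gmnp m n p) i = (2 + (val i \in [:: 0; p]))%N.
Proof.
have /andP[us sN] := nbrs_uniq_bounded (ltn_ord i).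
rewrite /deg -size_nbrs -(card_ord_in_seq us sN); apply: eq_card => j.
by rewrite !inE -(gadj_nbrs (ltn_ord i) (ltn_ord j)).
Qed.

Lemma sum_deg_Gmnp : (\sum_(i < N) deg (Gmnp m n p) i = N.+1 * 2)%N.
Proof.
rewrite (eq_bigr _ (fun i _ => deg_Gmnp i)) big_split sum_nat_const card_ord /=.
rewrite -big_mkcond sum1dep_card card_ord_in_seq /=; first lia.
  by rewrite inE; lia.
by apply/andP; split; lia.
Qed.

Lemma Gmnp_irr : irreflexive (Gmnp m n p).
Proof. by move=> i; rewrite /Gmnp orbb /Gmnp_e0; apply/negbTE; lia. Qed.

Lemma card_edge_Gmnp : #|edge_set (Gmnp m n p)| = N.+1.
Proof.
apply/eqP; rewrite -(eqn_pmul2r (isT : 0 < 2)%N) handshake ?sum_deg_Gmnp //.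
  by move=> i j; rewrite /Gmnp orbC.
exact: Gmnp_irr.
Qed.

End ThetaGraph.

Section IharaTheta.
Variables (R : realFieldType) (u : R) (m n p : nat).
Hypotheses (u2_lt1 : u ^+ 2 < 1) (p_gt0 : (0 < p)%N) (pm : (p.+2 <= m)%N) (pn : (p.+2 <= n)%N).

Local Notation N := (m + n - p - 1)%N.

Definition ihara_entry (i j : nat) : R :=
  if i == j then (if (i == 0) || (i == p) then 1 + 2%:R * u ^+ 2 else diag2 u)
  else if gadj m n p i j then - u else 0.

(* The paths are eliminated in the order m, ..., N - 1 (from 0 to p), then
   p + 1, ..., m - 1, and finally 1, ..., p. *)
Definition core1 i j := ihara_entry i j + path_corr u 0 p (diag2 u) (- u) (n - p - 1) i j.
Definition core2 i j := core1 i j + path_corr u p 0 (diag2 u) (- u) (m - p - 1) i j.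
Definition link3 := path_corr u 0 p (diag2 u) (- u) (n - p - 1) p 0
  + path_corr u p 0 (diag2 u) (- u) (m - p - 1) p 0.

Lemma det_ihara_elim1 :
  \det (natmx N ihara_entry) = geo u (n - p) * \det (natmx m core1).
Proof.
have -> : N = (m.-1 + (n - p - 2)).+2 by lia.
rewrite (@eq_natmx _ _ _ (attach_path u m.-1 0 p ihara_entry (m.-1 + (n - p - 2)).+1 (diag2 u) (- u))).
  rewrite det_attach_path ?diag2_ge1 // prednK; last by lia.
  have -> : (n - p - 2).+1 = (n - p - 1)%N by lia.
  by rewrite cont_diag2 // (_ : ((n - p - 1).+1 = n - p)%N) //; lia.
move=> i j iN jN; rewrite /attach_path.
case: (leqP i m.-1) => ia; case: (leqP j m.-1) => ja //=.
all: rewrite /path_link /ihara_entry /gadj /Gmnp_e0 /diag2; nat_case_bash.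
Qed.

Lemma det_ihara_elim2 : \det (natmx m core1) = geo u (m - p) * \det (natmx p.+1 core2).
Proof.
rewrite [in LHS](_ : m = (p + (m - p - 2)).+2); last by lia.
rewrite (@eq_natmx _ _ _ (attach_path u p p 0 core1 (p + (m - p - 2)).+1 (diag2 u) (- u))).
  rewrite det_attach_path ?diag2_ge1 //.
  have -> : (m - p - 2).+1 = (m - p - 1)%N by lia.
  by rewrite cont_diag2 // (_ : ((m - p - 1).+1 = m - p)%N) //; lia.
move=> i j iN jN; rewrite /attach_path.
case: (leqP i p) => ia; case: (leqP j p) => ja //=.
all: rewrite /core1 /path_corr /path_link /ihara_entry /gadj /Gmnp_e0 /diag2; nat_case_bash.
Qed.

Lemma det_ihara_elim3 : 1 <= core2 p p ->
  \det (natmx p.+1 core2) = cont u (core2 p p) p * (core2 0 0 + path_corr u 0 0 (core2 p p) link3 p 0 0).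
Proof.
move=> d1; rewrite [in LHS](_ : p.+1 = (0 + p.-1).+2); last by lia.
rewrite (@eq_natmx _ _ _ (attach_path u 0 0 0 core2 (0 + p.-1).+1 (core2 p p) link3)).
  by rewrite det_attach_path // prednK // det_mx11 mxE.
move=> i j iN jN; rewrite /attach_path.
case: (leqP i 0) => ia; case: (leqP j 0) => ja //=.
all: rewrite /link3 /core2 /core1 /path_corr /path_link /ihara_entry /gadj /Gmnp_e0 /diag2.
all: nat_case_bash.
Qed.

Lemma core2_00 : core2 0 0 = theta_pivot u (m - p) (n - p).
Proof.
have p0 : (0 == p) = false by lia.
rewrite /core2 /core1 /path_corr /ihara_entry /theta_pivot !eqxx /= p0 /=.
by rewrite !cont_diag2 // !subn1 !prednK; [ring | lia..].
Qed.

Lemma core2_pp : core2 p p = theta_pivot u (m - p) (n - p).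
Proof.
have p0 : (p == 0) = false by lia.
rewrite /core2 /core1 /path_corr /ihara_entry /theta_pivot !eqxx /= p0 /=.
by rewrite !cont_diag2 // !subn1 !prednK; [ring | lia..].
Qed.

Lemma link3E : link3 = theta_link u (m - p) (n - p).
Proof.
have p0 : (p == 0) = false by lia.
have p0' : (0 == p) = false by lia.
have ua : u ^+ (m - p) = u ^+ (m - p).-1 * u by rewrite -exprSr prednK //; lia.
have ub : u ^+ (n - p) = u ^+ (n - p).-1 * u by rewrite -exprSr prednK //; lia.
rewrite /link3 /path_corr /theta_link !eqxx /= p0 p0' /= !cont_diag2 // !subn1.
by rewrite ua ub !prednK; [ring | lia..].
Qed.

Lemma ihara_theta_det : (1 - u ^+ 2) * \det (natmx N ihara_entry) = theta_poly u m n p.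
Proof.
have pivot : 1 <= core2 p p by rewrite core2_pp theta_pivot_ge1 //; lia.
rewrite det_ihara_elim1 det_ihara_elim2 det_ihara_elim3 // core2_00 core2_pp link3E.
by rewrite theta_identity ?subnKC //; lia.
Qed.

Lemma horner_det_ihara :
  (map_poly intr (\det (1%:M - 'X *: adj_mx (Gmnp m n p) + 'X ^+ 2 *: Q_mx (Gmnp m n p)))).[u]
  = \det (natmx N ihara_entry).
Proof.
rewrite -det_map_mx -[LHS]/(horner_eval u _) -det_map_mx; congr (\det _).
apply/matrixP => i j; rewrite !mxE.
rewrite !(rmorphB, rmorphD, rmorphM, rmorphN, rmorphXn, rmorph1, rmorph_nat) /= map_polyX.
rewrite horner_evalE hornerX deg_Gmnp // /ihara_entry.
have [<-|ij] := eqVneq i j.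
  by rewrite Gmnp_irr // !inE !eqxx /=; case: ifP => _ /=; rewrite /diag2; ring.
rewrite val_eqE (negbTE ij) /= mul0r mulr0; change (Gmnp m n p i j) with (gadj m n p i j).
by case: (gadj m n p i j) => /=; ring.
Qed.
End IharaTheta.

Theorem mainTheorem6 (m n p : nat) :
  (0 < p)%N -> (maxn p.+1 2 < m)%N -> (maxn p.+1 2 < n)%N ->
  ihara_recip (Gmnp m n p) =
    - 4%:R * 'X ^+ (2 * m + 2 * n - 2 * p) + 'X ^+ (2 * m + 2 * n - 4 * p)
    + 2%:R * 'X ^+ (m + 2 * n - 2 * p) + 2%:R * 'X ^+ (2 * m + n - 2 * p)
    + 'X ^+ (2 * n) + 'X ^+ (2 * m) + 2%:R * 'X ^+ (m + n)
    - 2%:R * 'X ^+ (m + n - 2 * p) - 2%:R * 'X ^+ n - 2%:R * 'X ^+ m + 1 :> {poly int}.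
Proof.
move=> p_gt0; rewrite !gtn_max => /andP[pm _] /andP[pn _].
rewrite -[RHS]/(theta_poly ('X : {poly int}) m n p).
apply: (map_inj_poly (@intr_inj rat)); first by rewrite rmorph0.
apply: poly_eq_on_unit_interval => x x0 x1.
have x2 : x ^+ 2 < 1 by rewrite expr2 mulr_ilt1 ?ltW.
rewrite horner_theta_poly -(ihara_theta_det x2 p_gt0 pm pn) /ihara_recip /cyclo_rank.
rewrite card_edge_Gmnp // (_ : ((m + n - p - 1).+1 + 1 - (m + n - p - 1)).-1 = 1)%N; last by lia.
rewrite expr1 rmorphM hornerM horner_det_ihara //; congr (_ * _).
by rewrite rmorphB rmorph1 rmorphXn [in _ ^+ 2]/= map_polyX !hornerE.
Qed.
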